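(* The LP fractional mechanism has approximation ratio $1$ for the fractional scheduling problem without money, for any number $n$ of machines and any number $m$ of tasks.
   Context: Fractional scheduling without payments: $n$ machines, $m$ divisible tasks; machine $i$ has private true times $t_{i,j}\ge0$ and declares $\hat t_{i,j}\ge0$. A mechanism outputs fractions $\alpha_{i,j}(\hat{\mathbf t})\in[0,1]$ with $\sum_i\alpha_{i,j}=1$ for every task $j$. Machines are bound by their declarations: machine $i$ executes her fraction of task $j$ for time $\alpha_{i,j}\max\{\hat t_{i,j},t_{i,j}\}$; her cost is $C_i(\hat{\mathbf t})=\sum_j\alpha_{i,j}\max\{\hat t_{i,j},t_{i,j}\}$, and the (fractional) makespan is $\max_i C_i(\hat{\mathbf t})$. A mechanism is truthful if for every $\mathbf t$, $i$, $\hat{\mathbf t}$: $C_i(\mathbf t_i,\hat{\mathbf t}_{-i})\le C_i(\hat{\mathbf t})$. The approximation ratio of a truthful mechanism is the supremum over instances $\mathbf t$ of the makespan under truthful reports $\hat{\mathbf t}=\mathbf t$ divided by the optimal fractional makespan $\min_\alpha\max_i\sum_j\alpha_{i,j}t_{i,j}$. The LP fractional mechanism, on declarations $\hat{\mathbf t}$, outputs as fractions an optimal solution $\alpha(\hat{\mathbf t})$ (selected by a fixed rule among optimal solutions) of the linear program: minimize $\mu$ subject to $\sum_i\alpha_{i,j}=1$ for all $j$, $\mu-\sum_j\alpha_{i,j}\hat t_{i,j}\ge0$ for all $i$, $\alpha_{i,j}\ge0$. *)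

From mathcomp Require Import all_boot all_order all_algebra.
Set Implicit Arguments. Unset Strict Implicit. Unset Printing Implicit Defensive.
Import Order.TTheory GRing.Theory Num.Theory.
Local Open Scope ring_scope.

Section Sched.
Variables (R : realFieldType) (n m : nat).

(* A time matrix / declaration: t i j = time of machine i on task j. *)
Definition times := 'I_n -> 'I_m -> R.
(* A fractional assignment: a i j = fraction of task j given to machine i. *)
Definition fractions := 'I_n -> 'I_m -> R.

Definition nonneg_times (t : times) : Prop := forall i j, 0 <= t i j.

Definition feasible_frac (a : fractions) : Prop :=
  (forall i j, 0 <= a i j <= 1) /\ (forall j, \sum_(i < n) a i j = 1).

Definition load (a : fractions) (t : times) (i : 'I_n) : R :=
  \sum_(j < m) a i j * t i j.
Definition makespan (a : fractions) (t : times) : R :=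
  \big[Num.max/0]_(i < n) load a t i.

Definition lp_feasible (th : times) (a : fractions) (mu : R) : Prop :=
  (forall j, \sum_(i < n) a i j = 1) /\
  (forall i, 0 <= mu - \sum_(j < m) a i j * th i j) /\
  (forall i j, 0 <= a i j).
Definition lp_optimal (th : times) (a : fractions) (mu : R) : Prop :=
  lp_feasible th a mu /\ forall b nu, lp_feasible th b nu -> mu <= nu.

Definition mechanism := times -> fractions.

(* M is an LP fractional mechanism: on every (nonnegative) declaration it
   outputs the alpha-part of an optimal solution of the LP; M itself is
   the fixed selection rule among optimal solutions. *)
Definition LP_mechanism (M : mechanism) : Prop :=
  forall th, nonneg_times th -> exists mu, lp_optimal th (M th) mu.

Definition cost (M : mechanism) (t th : times) (i : 'I_n) : R :=
  \sum_(j < m) M th i j * Num.max (th i j) (t i j).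

Definition report_true (t th : times) (i : 'I_n) : times :=
  fun k => if k == i then t i else th k.

Definition truthful (M : mechanism) : Prop :=
  forall (t th : times) (i : 'I_n), nonneg_times t -> nonneg_times th ->
    cost M t (report_true t th i) i <= cost M t th i.

Definition approx_ratio_one (M : mechanism) : Prop :=
  forall t : times, nonneg_times t ->
    forall b : fractions, feasible_frac b -> makespan (M t) t <= makespan b t.

End Sched.

(** An optimal solution of the LP equalizes the loads: if some machine had
    load below the optimum [mu], moving a small fraction [e] of every task
    onto it would lower every load below [mu].  Truthfulness follows: when
    machine [i] lies, her cost is at least her declared load, hence at least
    the LP value on the lie, and the assignment of the lie together with her
    cost is feasible for the LP on the truthful report; so the LP value on
    the truthful report, which bounds her truthful cost, is at most her cost
    when lying.  The approximation ratio is 1 because the LP is exactly the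
    fractional makespan minimization. *)

From mathcomp Require Import all_boot all_order all_algebra.
From mathcomp Require Import lra.
Set Implicit Arguments. Unset Strict Implicit. Unset Printing Implicit Defensive.
Import Order.TTheory GRing.Theory Num.Theory.
Local Open Scope ring_scope.

Section LinearProgram.
Variables (R : realFieldType) (n m : nat).
Implicit Types (th t : times R n m) (a b : fractions R n m) (mu : R).

Lemma load_ge0 th a i :
  nonneg_times th -> (forall j, 0 <= a i j) -> 0 <= load a th i.
Proof. by move=> hth ha; apply: sumr_ge0 => j _; apply: mulr_ge0. Qed.

Lemma load_le_lp_value th a mu i : lp_feasible th a mu -> load a th i <= mu.
Proof. by case=> _ [hl _]; rewrite -subr_ge0; apply: hl. Qed.

Definition shift_to a (p : 'I_n) (e : R) : fractions R n m :=
  fun k j => (1 - e) * a k j + e * (k == p)%:R.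

Lemma sum_shift_to a p e j :
  \sum_(i < n) a i j = 1 -> \sum_(i < n) shift_to a p e i j = 1.
Proof.
move=> hs; rewrite big_split /= -!mulr_sumr hs (bigD1 p) //= eqxx big1.
  by rewrite addr0 !mulr1 subrK.
by move=> i /negPf ->.
Qed.

Lemma load_shift_to th a p e k :
  load (shift_to a p e) th k =
  (1 - e) * load a th k + e * (k == p)%:R * \sum_(j < m) th k j.
Proof.
rewrite /load !mulr_sumr -big_split /=.
by apply: eq_bigr => j _; rewrite /shift_to mulrDl !mulrA.
Qed.

Lemma lp_optimal_load_ge th a mu p :
  nonneg_times th -> lp_optimal th a mu -> mu <= load a th p.
Proof.
move=> hth [[hs [hl ha]] hopt]; rewrite leNgt; apply/negP => hLmu.
set L := load a th p in hLmu; set T := \sum_(j < m) th p j.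
have L0 : 0 <= L by apply: load_ge0.
have T0 : 0 <= T by apply: sumr_ge0.
have d0 : 0 < mu - L by rewrite subr_gt0.
set e := (mu - L) / (mu - L + T).
have e0 : 0 < e by apply: divr_gt0 => //; lra.
have e1 : e <= 1 by rewrite ler_pdivrMr; lra.
have eT : e * T < mu - L.
  by rewrite mulrAC ltr_pdivrMr; [rewrite ltr_pM2l; lra | lra].
pose nu := Num.max ((1 - e) * mu) (L + e * T).
have hfeas : lp_feasible th (shift_to a p e) nu.
  split; [by move=> j; apply: sum_shift_to | split].
  - move=> k; rewrite subr_ge0 -/(load _ th k) load_shift_to le_max.
    case: (eqVneq k p) => [->|hk].
    + rewrite mulr1 -/L -/T; apply/orP; right.
      have := mulr_ge0 (ltW e0) L0; lra.
    + rewrite mulr0 mul0r addr0; apply/orP; left.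
      by rewrite ler_wpM2l ?subr_ge0 // -subr_ge0 hl.
  - move=> k j; apply: addr_ge0; apply: mulr_ge0 => //; lra.
have shrink : (1 - e) * mu < mu by rewrite -[ltRHS]mul1r ltr_pM2r; lra.
by have := hopt _ _ hfeas; rewrite le_max => /orP [] ?; lra.
Qed.

End LinearProgram.

Section Makespan.
Variables (R : realFieldType) (n m : nat).
Implicit Types (t : times R n m) (a b : fractions R n m).

Lemma makespan_ge0 a t : 0 <= makespan a t.
Proof. by apply: (big_rec (fun y => 0 <= y)) => // k y _ hy; rewrite le_max hy orbT. Qed.

Lemma load_le_makespan a t i : load a t i <= makespan a t.
Proof. by rewrite /makespan (bigD1 i) //= le_max lexx. Qed.

Lemma makespan_le a t x :
  0 <= x -> (forall i, load a t i <= x) -> makespan a t <= x.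
Proof.
move=> x0 hx; apply: (big_ind (fun y => y <= x)) => // y z hy hz.
by rewrite ge_max hy hz.
Qed.

Lemma feasible_frac_lp_feasible a t :
  feasible_frac a -> lp_feasible t a (makespan a t).
Proof.
case=> ha hs; split; [by [] | split].
- by move=> i; rewrite subr_ge0; apply: load_le_makespan.
- by move=> i j; case/andP: (ha i j).
Qed.

End Makespan.

Section Mechanism.
Variables (R : realFieldType) (n m : nat) (M : mechanism R n m).
Hypothesis LP_M : LP_mechanism M.

Lemma cost_truthful_report t th i :
  cost M t (report_true t th i) i =
  load (M (report_true t th i)) (report_true t th i) i.
Proof.
have hti : report_true t th i i = t i by rewrite /report_true eqxx.
by apply: eq_bigr => j _; rewrite hti maxxx.
Qed.

Lemma load_le_cost t th u i :
  (forall j, 0 <= M th i j) -> (forall j, u i j <= Num.max (th i j) (t i j)) ->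
  load (M th) u i <= cost M t th i.
Proof. by move=> hM hu; apply: ler_sum => j _; rewrite ler_wpM2l. Qed.

Lemma LP_mechanism_truthful : truthful M.
Proof.
move=> t th i ht hth; set t' := report_true t th i.
have ht' : nonneg_times t' by move=> k j; rewrite /t' /report_true; case: (k == i).
have [mu' opt'] := LP_M ht'; have [mu opt] := LP_M hth.
have [[hs [_ hM]] _] := opt; have [_ hmin'] := opt'.
set c := cost M t th i.
have mu_le_c : mu <= c.
  apply: le_trans (lp_optimal_load_ge i hth opt) _.
  by apply: load_le_cost => // j; rewrite le_max lexx.
have feas_c : lp_feasible t' (M th) c.
  split; [by [] | split; last by []].
  move=> k; rewrite subr_ge0 -/(load _ t' k); case: (eqVneq k i) => [->|hk].
  - apply: load_le_cost => // j.
    by rewrite /t' /report_true eqxx le_max lexx orbT.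
  - have -> : load (M th) t' k = load (M th) th k.
      by rewrite /t' /load /report_true (negPf hk).
    by apply: le_trans mu_le_c; apply: load_le_lp_value opt.1.
rewrite cost_truthful_report; apply: le_trans (hmin' _ _ feas_c).
exact: load_le_lp_value opt'.1.
Qed.

Lemma LP_mechanism_approx_ratio_one : approx_ratio_one M.
Proof.
move=> t ht b hb; have [mu [feas hmin]] := LP_M ht.
have mu_le : mu <= makespan b t by apply/hmin/feasible_frac_lp_feasible.
apply: makespan_le => [|i]; first exact: makespan_ge0.
by apply: le_trans mu_le; apply: load_le_lp_value feas.
Qed.

End Mechanism.

Theorem theorem5 (R : realFieldType) (n m : nat) (M : mechanism R n m) :
  LP_mechanism M -> truthful M /\ approx_ratio_one M.
Proof.
move=> LP_M; split.
- exact: LP_mechanism_truthful.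
- exact: LP_mechanism_approx_ratio_one.
Qed.
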